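(* Let $\hat q,\hat p$ be $n\times n$ parametric matrices and $M$ an $n\times n$ $(\hat q,\hat p)$-Manin matrix over $\mathfrak R$. Let $0\le r\le n$ and let $I=(i_1,\dots,i_r)$ and $K=(k_1,\dots,k_{n-r})$ be multi-indices, each with distinct entries from $\{1,\dots,n\}$. Then $$\varepsilon(\hat p,I\oplus K)\,\mathrm{cdet}_{\hat q}(M)=\sum_{J}\varepsilon(\hat q,J\oplus J^c)\,\mathrm{cdet}_{\hat q}(M_{JI})\,\mathrm{cdet}_{\hat q}(M_{J^c,K}),$$ where the sum is over all increasing multi-indices $J=(j_1<\dots<j_r)$ with entries in $\{1,\dots,n\}$, and $J^c$ is the increasing multi-index formed by the elements of $\{1,\dots,n\}\setminus J$.
   Context: $\mathfrak R$ is an associative unital algebra over $\mathbb C$. A parametric $n\times n$ matrix is a matrix $\hat q=(q_{ij})$ of nonzero complex numbers with $q_{ij}q_{ji}=1$, $q_{ii}=1$. An $n\times m$ matrix $M$ over $\mathfrak R$ is a $(\hat q,\hat p)$-Manin matrix ($\hat q$ $n\times n$, $\hat p$ $m\times m$ parametric) if $M_{ik}M_{jk}=q_{ji}M_{jk}M_{ik}$ for $i<j$ and all $k$, and $M_{ik}M_{jl}-q_{ji}p_{kl}M_{jl}M_{ik}+p_{kl}M_{il}M_{jk}-q_{ji}M_{jk}M_{il}=0$ for $i<j$, $k<l$. For multi-indices $I=(i_1,\dots,i_r)$, $K=(k_1,\dots,k_s)$, $I\oplus K=(i_1,\dots,i_r,k_1,\dots,k_s)$. For a multi-index $I$, $\varepsilon(\hat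 q,I)=0$ if two entries coincide, and otherwise $\varepsilon(\hat q,I)=\prod_{s<t,\ i_s>i_t}(-q_{i_si_t})$. For an increasing $I=(i_1<\dots<i_r)$ and $\sigma\in S_r$, $\varepsilon(\hat q,I,\sigma)=\prod_{s<t,\ \sigma(s)>\sigma(t)}(-q_{i_{\sigma(s)}i_{\sigma(t)}})$. For increasing $I=(i_1<\dots<i_r)$ and any multi-index $J=(j_1,\dots,j_r)$, $\mathrm{cdet}_{\hat q}(M_{IJ})=\sum_{\sigma\in S_r}\varepsilon(\hat q,I,\sigma)M_{i_{\sigma(1)},j_1}\cdots M_{i_{\sigma(r)},j_r}$; $\mathrm{cdet}_{\hat q}(M)$ is the case $I=J=(1,\dots,n)$. *)

From HB Require Import structures.
From mathcomp Require Import all_boot all_order all_algebra all_fingroup.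
From mathcomp Require Import reals complex.
Set Implicit Arguments. Unset Strict Implicit. Unset Printing Implicit Defensive.
Import Order.TTheory GRing.Theory Num.Theory.
Local Open Scope ring_scope.

Section Defs.
Variable C : comNzRingType.

Definition parametric (n : nat) (q : 'M[C]_n) : Prop :=
  (forall i j, q i j != 0) /\ (forall i j, q i j * q j i = 1) /\ (forall i, q i i = 1).

Variable A : algType C.

Definition manin (n m : nat) (q : 'M[C]_n) (p : 'M[C]_m) (M : 'M[A]_(n, m)) : Prop :=
  (forall (i j : 'I_n) (k : 'I_m), (i < j)%N ->
      M i k * M j k = q j i *: (M j k * M i k)) /\
  (forall (i j : 'I_n) (k l : 'I_m), (i < j)%N -> (k < l)%N ->
      M i k * M j l - (q j i * p k l) *: (M j l * M i k)
      + p k l *: (M i l * M j k) - q j i *: (M j k * M i l) = 0).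

Definition eps (n k : nat) (q : 'M[C]_n) (I : k.-tuple 'I_n) : C :=
  if uniq I then
    \prod_(s < k) \prod_(t < k | (s < t)%N && (tnth I t < tnth I s)%N)
       (- q (tnth I s) (tnth I t))
  else 0.

Definition eps_perm (n k : nat) (q : 'M[C]_n) (I : k.-tuple 'I_n) (s : 'S_k) : C :=
  \prod_(a < k) \prod_(b < k | (a < b)%N && (s b < s a)%N)
     (- q (tnth I (s a)) (tnth I (s b))).

Definition cdet (n m k : nat) (q : 'M[C]_n) (M : 'M[A]_(n, m))
    (I : k.-tuple 'I_n) (J : k.-tuple 'I_m) : A :=
  \sum_(s : 'S_k) eps_perm q I s *: \prod_(t < k) M (tnth I (s t)) (tnth J t).

End Defs.

Definition increasing (n k : nat) (J : k.-tuple 'I_n) : bool :=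
  sorted (fun a b : 'I_n => (a < b)%N) J.

Definition compl_tuple (n r : nat) (J : r.-tuple 'I_n) : (n - r).-tuple 'I_n :=
  [tuple nth (widen_ord (leq_subr r n) i) [seq j <- enum 'I_n | j \notin J] i
     | i < n - r].

From HB Require Import structures.
From mathcomp Require Import all_boot all_order all_algebra all_fingroup.
From mathcomp Require Import reals complex.
From mathcomp Require Import zify.
Set Implicit Arguments. Unset Strict Implicit. Unset Printing Implicit Defensive.
Import Order.TTheory GRing.Theory Num.Theory.
Local Open Scope ring_scope.

(* Extend the column determinant to any sequence d of columns by summing
   eps(q, f) M_{f 1, d 1} ... M_{f k, d k} over all row maps f.  Pairing f with
   f composed with an adjacent transposition, the first Manin relation makes this
   vanish when two adjacent columns coincide, and the second one shows that
   swapping two adjacent columns d_t < d_{t+1} multiplies it by -p_{d_{t+1} d_t};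
   sorting I ++ K one inversion at a time gives eps(p, I ++ K) cdet_q(M).
   On the other side, a row map of I ++ K splits into its restrictions g and h to
   the first r and the last n - r positions, and eps(q, g ++ h) factors as
   eps(q, g) eps(q, h) times the cross weights between g and h.  Grouping the
   injective g by their image J, the cross weights vanish unless h takes its
   values in J^c, and they then equal eps(q, J ++ J^c): this is the sum
   over J of eps(q, J ++ J^c) cdet_q(M_{J,I}) cdet_q(M_{J^c,K}). *)

Section BigAdjacent.
Variables (m : nat) (t0 t1 : 'I_m).
Hypothesis t1_succ : t1 = t0.+1 :> nat.

Lemma tperm_adjacent_val (u : 'I_m) :
  tperm t0 t1 u
  = (if u == t0 :> nat then t0.+1 else if u == t1 :> nat then t0 : nat else u) :> nat.
Proof.
case: tpermP => [->|->|/eqP u0 /eqP u1]; rewrite ?eqxx ?t1_succ ?(gtn_eqF (ltnSn _)) //.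
by rewrite -!val_eqE in u0 u1; rewrite (negPf u0) -t1_succ (negPf u1).
Qed.

Lemma big_ltn_pairs_tperm (T : Type) (idx : T) (op : Monoid.com_law idx)
    (F : 'I_m -> 'I_m -> T) :
  let rest := \big[op/idx]_(x : 'I_m * 'I_m | (x.1 < x.2)%N && (x != (t0, t1)))
                F x.1 x.2 in
  \big[op/idx]_(x : 'I_m * 'I_m | (x.1 < x.2)%N) F x.1 x.2 = op (F t0 t1) rest /\
  \big[op/idx]_(x : 'I_m * 'I_m | (x.1 < x.2)%N) F (tperm t0 t1 x.1) (tperm t0 t1 x.2)
    = op (F t1 t0) rest.
Proof.
have lt01 : (t0 < t1)%N by rewrite t1_succ.
split; rewrite (bigD1 (t0, t1)) //= ?tpermL ?tpermR; congr (op _ _).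
pose tp (x : 'I_m * 'I_m) := (tperm t0 t1 x.1, tperm t0 t1 x.2).
have tp_inj : injective tp by move=> [a b] [c d] [] /perm_inj-> /perm_inj->.
rewrite [RHS](reindex_inj tp_inj); apply: eq_bigl => -[a b] /=.
rewrite !xpair_eqE -!(inj_eq (@ord_inj m)) !tperm_adjacent_val t1_succ.
move: (nat_of_ord a) (nat_of_ord b) (nat_of_ord t0) => x y z; repeat case: ifP; lia.
Qed.

Lemma prod_ord_adjacent (R : pzSemiRingType) (G : 'I_m -> R) :
  \prod_(u < m) G u
  = \prod_(u < m | (u < t0)%N) G u * (G t0 * G t1) * \prod_(u < m | (t1 < u)%N) G u.
Proof.
pose F k := G (insubd t0 k).
have toF P : \prod_(u < m | P (val u)) G u = \prod_(0 <= k < m | P k) F k.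
  by rewrite big_mkord; apply: eq_bigr => u _; rewrite /F valKd.
have t2m : (t0.+2 <= m)%N by rewrite -t1_succ.
have left : \prod_(u < m | (u < t0)%N) G u = \prod_(0 <= k < t0) F k.
  by rewrite (toF (fun k => k < t0)%N) [RHS](big_nat_widen _ _ m) // 2?ltnW.
have right : \prod_(u < m | (t1 < u)%N) G u = \prod_(t0.+2 <= k < m) F k.
  by rewrite (toF (fun k => t1 < k)%N) t1_succ [RHS](big_nat_widenl _ 0).
rewrite left right (toF xpredT) (@big_cat_nat _ _ _ t0) ?leq0n 1?ltnW 1?ltnW //=.
rewrite (@big_cat_nat _ _ _ t0.+1 t0) // 1?ltnW // (@big_cat_nat _ _ _ t0.+2 t0.+1) //.
by rewrite !big_nat1 /F valKd -t1_succ valKd !mulrA.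
Qed.

Lemma prod_ord_tperm_outside (R : pzSemiRingType) (G : 'I_m -> 'I_m -> R) :
  (\prod_(u < m | (u < t0)%N) G u (tperm t0 t1 u) = \prod_(u < m | (u < t0)%N) G u u) *
  (\prod_(u < m | (t1 < u)%N) G u (tperm t0 t1 u) = \prod_(u < m | (t1 < u)%N) G u u).
Proof.
have fixed (u : 'I_m) : (u < t0)%N || (t1 < u)%N -> tperm t0 t1 u = u.
  by move=> out; apply: tpermD; rewrite -(inj_eq (@ord_inj m)) neq_ltn; lia.
by split; apply: eq_bigr => u out; rewrite fixed // out ?orbT.
Qed.

End BigAdjacent.

Lemma adjacent_incr_ge k m (c : 'I_k -> 'I_m) :
  (forall t0 t1 : 'I_k, t1 = t0.+1 :> nat -> (c t0 < c t1)%N) ->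
  forall u : 'I_k, (u <= c u)%N.
Proof.
move=> c_incr [u lt_uk] /=; elim: u lt_uk => // u IHu lt_uk.
exact: leq_ltn_trans (IHu (ltnW lt_uk)) (c_incr (Ordinal (ltnW lt_uk)) (Ordinal lt_uk) erefl).
Qed.

Lemma adjacent_incr_id m (c : 'I_m -> 'I_m) :
  (forall t0 t1 : 'I_m, t1 = t0.+1 :> nat -> (c t0 < c t1)%N) -> c =1 id.
Proof.
move=> c_incr u; apply/ord_inj/anti_leq; rewrite adjacent_incr_ge // andbT.
(* [c u <= u] is [adjacent_incr_ge] for the reversed map [rev_ord \o c \o rev_ord]. *)
have rev_incr (t0 t1 : 'I_m) : t1 = t0.+1 :> nat ->
    (rev_ord (c (rev_ord t0)) < rev_ord (c (rev_ord t1)))%N.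
  move=> t1_succ; have := c_incr (rev_ord t1) (rev_ord t0).
  by rewrite /= t1_succ; have := ltn_ord t1; have := ltn_ord (c (rev_ord t0)); lia.
have := adjacent_incr_ge rev_incr (rev_ord u); rewrite /= rev_ordK.
by have := ltn_ord (c u); lia.
Qed.

Definition inversions k m (c : 'I_k -> 'I_m) : nat :=
  \sum_(x : 'I_k * 'I_k | (x.1 < x.2)%N) (c x.2 < c x.1)%N.

Lemma inversions_tperm k m (t0 t1 : 'I_k) (c : 'I_k -> 'I_m) :
  t1 = t0.+1 :> nat -> (c t1 < c t0)%N -> inversions c = (inversions (c \o tperm t0 t1)).+1.
Proof.
move=> t1_succ lt_c; rewrite /inversions.
have [-> ->] :=
  @big_ltn_pairs_tperm _ _ _ t1_succ nat 0%N addn (fun a b => (c b < c a)%N : nat).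
by rewrite lt_c ltnNge ltnW.
Qed.

Section ImageTuple.
Variables (T : eqType) (r : nat) (J : r.-tuple T) (g : 'I_r -> T).
Hypotheses (J_uniq : uniq J) (g_inj : injective g) (g_in : forall u, g u \in J).

Lemma perm_image_tuple : perm_eq [seq g u | u <- enum 'I_r] J.
Proof.
have g_uniq : uniq [seq g u | u <- enum 'I_r] by rewrite map_inj_uniq ?enum_uniq.
have sub_J : {subset [seq g u | u <- enum 'I_r] <= J} by move=> x /mapP[u _ ->].
have size_le : (size J <= size [seq g u | u <- enum 'I_r])%N.
  by rewrite size_map size_enum_ord size_tuple.
have [_ eq_J] := uniq_min_size g_uniq sub_J size_le.
exact: uniq_perm.
Qed.

Lemma big_image_tuple (R : Type) (idx : R) (op : Monoid.com_law idx) (F : T -> R) :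
  \big[op/idx]_(s < r) F (g s) = \big[op/idx]_(s < r) F (tnth J s).
Proof.
by rewrite -(big_tuple _ _ J xpredT) -(perm_big _ perm_image_tuple) big_map big_enum.
Qed.

End ImageTuple.

Section Increasing.
Variable n : nat.

Lemma ord_ltn_trans : transitive (fun a b : 'I_n => (a < b)%N).
Proof. by move=> b a c; apply: ltn_trans. Qed.

Lemma increasing_uniq r (J : r.-tuple 'I_n) : increasing J -> uniq J.
Proof. exact: (sorted_uniq ord_ltn_trans (fun a => ltnn a)). Qed.

Lemma increasing_tnth_ltn r (J : r.-tuple 'I_n) (a b : 'I_r) :
  increasing J -> (tnth J a < tnth J b)%N = (a < b)%N.
Proof.
move=> J_incr; have lt_ab (x y : 'I_r) : (x < y)%N -> (tnth J x < tnth J y)%N.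
  move=> xy; have x0 := tnth J x; rewrite !(tnth_nth x0).
  by apply: (sorted_ltn_nth ord_ltn_trans) => //; rewrite inE size_tuple.
case: (ltngtP a b) => [/lt_ab //|/lt_ab /ltnW|/val_inj->]; last exact: ltnn.
by rewrite leqNgt => /negbTE.
Qed.

Lemma increasing_ord_tuple : increasing (ord_tuple n).
Proof.
by have := iota_ltn_sorted 0 n; rewrite -val_enum_ord sorted_map.
Qed.

Lemma size_filter_notin r (J : r.-tuple 'I_n) :
  uniq J -> size [seq j <- enum 'I_n | j \notin J] = (n - r)%N.
Proof.
move=> J_uniq; have count_J : count (mem J) (enum 'I_n) = r.
  by rewrite enumT -size_filter -[RHS](size_tuple J) -(card_uniqP J_uniq) cardE.
rewrite size_filter; change (count (predC (mem J)) (enum 'I_n) = n - r)%N.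
by have := count_predC (mem J) (enum 'I_n); rewrite size_enum_ord count_J; lia.
Qed.

Lemma compl_tupleE r (J : r.-tuple 'I_n) :
  uniq J -> val (compl_tuple J) = [seq j <- enum 'I_n | j \notin J].
Proof.
move=> J_uniq; have size_s := size_filter_notin J_uniq.
set s := filter _ _ in size_s *; case def_s : s => [|x0 s'].
  by apply: size0nil; rewrite size_tuple -size_s def_s.
rewrite -def_s; apply: (@eq_from_nth _ x0); first by rewrite size_tuple size_s.
move=> i; rewrite size_tuple => lt_i.
rewrite /compl_tuple /= (nth_map (Ordinal lt_i)) ?size_enum_ord // nth_enum_ord //=.
by apply: set_nth_default; rewrite -/s size_s.
Qed.

Lemma mem_compl_tuple r (J : r.-tuple 'I_n) (x : 'I_n) :
  uniq J -> (x \in compl_tuple J) = (x \notin J).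
Proof.
move=> J_uniq; rewrite -[x \in compl_tuple J]/(x \in val (compl_tuple J)).
by rewrite compl_tupleE // mem_filter mem_enum andbT.
Qed.

Lemma increasing_compl_tuple r (J : r.-tuple 'I_n) : uniq J -> increasing (compl_tuple J).
Proof.
move=> J_uniq; rewrite /increasing compl_tupleE //.
by apply: sorted_filter; [exact: ord_ltn_trans | exact: increasing_ord_tuple].
Qed.

Lemma sorted_image_tuple r (g : 'I_r -> 'I_n) : injective g ->
  exists J : r.-tuple 'I_n, [/\ increasing J, forall u, g u \in J &
    forall J' : r.-tuple 'I_n, increasing J' -> (forall u, g u \in J') -> J' = J].
Proof.
move=> g_inj; set s := [seq g u | u <- enum 'I_r].
have s_uniq : uniq s by rewrite map_inj_uniq ?enum_uniq.
have size_J : size (sort (fun a b : 'I_n => (a <= b)%N) s) == r.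
  by rewrite size_sort size_map size_enum_ord.
set J := Tuple size_J; have mem_J : J =i s by apply: mem_sort.
have J_incr : increasing J.
  suff : sorted ltn (map val J) by rewrite sorted_map.
  rewrite ltn_sorted_uniq_leq map_inj_uniq ?sort_uniq ?s_uniq /= ?sorted_map;
    last exact: val_inj.
  exact: (@sort_sorted _ (fun a b : 'I_n => (a <= b)%N) (fun a b => leq_total a b)).
have g_in u : g u \in J by rewrite mem_J map_f ?mem_enum.
exists J; split=> // J' J'_incr g_in'; apply: val_inj.
apply: (irr_sorted_eq ord_ltn_trans) => // [a|x]; first exact: ltnn.
by rewrite mem_J -(perm_mem (perm_image_tuple (increasing_uniq J'_incr) g_inj g_in')).
Qed.

Lemma sum_ffun_by_image (V : nmodType) r
    (F : {ffun 'I_r -> 'I_n} -> {ffun 'I_(n - r) -> 'I_n} -> V) :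
  (forall (g : {ffun 'I_r -> 'I_n}) h, ~~ injectiveb g -> F g h = 0) ->
  (forall (g : {ffun 'I_r -> 'I_n}) (h : {ffun 'I_(n - r) -> 'I_n}) s u,
     h u = g s -> F g h = 0) ->
  \sum_g \sum_h F g h
  = \sum_(J : r.-tuple 'I_n | increasing J)
      \sum_(g : {ffun 'I_r -> 'I_n} | [forall u, g u \in J])
      \sum_(h : {ffun 'I_(n - r) -> 'I_n} | [forall u, h u \in compl_tuple J]) F g h.
Proof.
move=> F_inj F_overlap; symmetry.
transitivity (\sum_(J : r.-tuple 'I_n | increasing J)
    \sum_(g : {ffun 'I_r -> 'I_n}) \sum_(h : {ffun 'I_(n - r) -> 'I_n})
    (if [forall u, g u \in J] && [forall u, h u \in compl_tuple J] then F g h else 0)).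
  apply: eq_bigr => J _; rewrite big_mkcond; apply: eq_bigr => g _.
  by case: ifP => _ /=; [rewrite big_mkcond | rewrite big1].
rewrite exchange_big; apply: eq_bigr => g _; rewrite exchange_big; apply: eq_bigr => h _ /=.
have [/injectiveP g_inj | /F_inj ->] := boolP (injectiveb g); last first.
  by rewrite big1 // => J _; case: ifP.
have [J0 [J0_incr g_in J0_unique]] := sorted_image_tuple g_inj.
rewrite (bigD1 J0) //= big1 ?addr0 => [|J /andP[J_incr neq_J]]; last first.
  by case: ifP => // /andP[/forallP /(J0_unique J J_incr) eq_J _]; rewrite eq_J eqxx in neq_J.
rewrite (_ : [forall u, g u \in J0]) /=; last exact/forallP.
case: ifPn => // /forallPn[u]; rewrite mem_compl_tuple ?increasing_uniq // negbK => h_in.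
have : h u \in [seq g s | s <- enum 'I_r].
  by rewrite (perm_mem (perm_image_tuple (increasing_uniq J0_incr) g_inj g_in)).
by case/mapP => s _ /F_overlap ->.
Qed.

End Increasing.

Section FinFunSums.
Variable V : nmodType.

Lemma sum_perm_ffun (T : finType) (F : {ffun T -> T} -> V) :
  (forall f : {ffun T -> T}, ~~ injectiveb f -> F f = 0) ->
  \sum_(s : {perm T}) F (pval s) = \sum_f F f.
Proof.
move=> F0; rewrite [RHS](bigID (fun f : {ffun T -> T} => injectiveb f)) /=.
rewrite [X in _ + X]big1 ?addr0 //.
rewrite (reindex (@pval _)) /=; first by apply: eq_bigl => s; rewrite (valP s).
exists (insubd (1%g : {perm T})) => [s _ | f f_inj]; first exact: valKd.
by rewrite insubdK.
Qed.

Lemma sum_ffun_tuple (T : finType) r (J : r.-tuple T) (F : {ffun 'I_r -> T} -> V) :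
  uniq J ->
  \sum_(s : {ffun 'I_r -> 'I_r}) F [ffun u => tnth J (s u)]
  = \sum_(g : {ffun 'I_r -> T} | [forall u, g u \in J]) F g.
Proof.
move=> J_uniq; symmetry.
pose idx (g : {ffun 'I_r -> T}) := [ffun u => insubd u (index (g u) J)].
rewrite (reindex_onto (fun s : {ffun 'I_r -> 'I_r} => [ffun u => tnth J (s u)]) idx) /=.
  apply: eq_bigl => s; rewrite [X in X && _](_ : _ = true).
    apply/eqP/ffunP => u; apply: val_inj; rewrite !ffunE val_insubd.
    by rewrite (tnth_nth (tnth J (s u))) index_uniq ?size_tuple ?ltn_ord.
  by apply/forallP => u; rewrite ffunE mem_tnth.
move=> g /forallP g_in; apply/ffunP => u; rewrite !ffunE.
have lt_idx : (index (g u) J < r)%N by have := g_in u; rewrite -index_mem size_tuple.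
by rewrite (tnth_nth (g u)) val_insubd lt_idx nth_index.
Qed.

Definition ffun_join (T : Type) r k (g : {ffun 'I_r -> T}) (h : {ffun 'I_k -> T})
  : {ffun 'I_(r + k) -> T} :=
  [ffun u => match split u with inl a => g a | inr b => h b end].

Lemma ffun_join_lshift T r k (g : {ffun 'I_r -> T}) (h : {ffun 'I_k -> T}) a :
  ffun_join g h (lshift k a) = g a.
Proof. by rewrite ffunE (unsplitK (inl a)). Qed.

Lemma ffun_join_rshift T r k (g : {ffun 'I_r -> T}) (h : {ffun 'I_k -> T}) b :
  ffun_join g h (rshift r b) = h b.
Proof. by rewrite ffunE (unsplitK (inr b)). Qed.

Lemma sum_ffun_join (T : finType) r k (F : {ffun 'I_(r + k) -> T} -> V) :
  \sum_f F f = \sum_(g : {ffun 'I_r -> T}) \sum_(h : {ffun 'I_k -> T}) F (ffun_join g h).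
Proof.
rewrite pair_big (reindex (fun x => ffun_join x.1 x.2)) //=.
pose unjoin (f : {ffun 'I_(r + k) -> T}) :=
  ([ffun a => f (lshift k a)], [ffun b => f (rshift r b)]).
apply: onW_bij; exists unjoin => [[g h] | f].
  by congr (_, _); apply/ffunP => u; rewrite ffunE ?ffun_join_lshift ?ffun_join_rshift.
apply/ffunP => u; rewrite ffunE.
by case: splitP => [a|b] eq_u; rewrite ffunE; congr (f _); apply: val_inj.
Qed.

End FinFunSums.

Section QSign.
Variables (C : comNzRingType) (n : nat) (q : 'M[C]_n).

Definition qweight (x y : 'I_n) : C :=
  if (x < y)%N then 1 else if x == y then 0 else - q x y.

(* [qsign f] is eps(q, f) for the multi-index f; it is 0 unless f is injective. *)
Definition qsign m (f : 'I_m -> 'I_n) : C :=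
  \prod_(s < m) \prod_(t < m | (s < t)%N) qweight (f s) (f t).

Definition qcross r k (g : 'I_r -> 'I_n) (h : 'I_k -> 'I_n) : C :=
  \prod_(s < r) \prod_(t < k) qweight (g s) (h t).

Lemma qweightxx x : qweight x x = 0.
Proof. by rewrite /qweight ltnn eqxx. Qed.

Lemma qweight_lt (x y : 'I_n) : (x < y)%N -> qweight x y = 1.
Proof. by rewrite /qweight => ->. Qed.

Lemma qweight_gt (x y : 'I_n) : (y < x)%N -> qweight x y = - q x y.
Proof. by move=> lt_yx; rewrite /qweight ltnNge ltnW //= -val_eqE gtn_eqF. Qed.

Lemma eq_qsign m (f g : 'I_m -> 'I_n) : f =1 g -> qsign f = qsign g.
Proof. by move=> eq_fg; apply: eq_bigr => s _; apply: eq_bigr => t _; rewrite !eq_fg. Qed.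

Lemma qsign_pairs m (f : 'I_m -> 'I_n) :
  qsign f = \prod_(x : 'I_m * 'I_m | (x.1 < x.2)%N) qweight (f x.1) (f x.2).
Proof. by rewrite /qsign pair_big_dep. Qed.

Lemma qsign_tperm m (t0 t1 : 'I_m) (f : 'I_m -> 'I_n) : t1 = t0.+1 :> nat ->
  let rest := \prod_(x : 'I_m * 'I_m | (x.1 < x.2)%N && (x != (t0, t1)))
                qweight (f x.1) (f x.2) in
  qsign f = qweight (f t0) (f t1) * rest /\
  qsign (f \o tperm t0 t1) = qweight (f t1) (f t0) * rest.
Proof.
move=> t1_succ; rewrite !qsign_pairs.
exact: (@big_ltn_pairs_tperm _ _ _ t1_succ C 1 *%R (fun a b => qweight (f a) (f b))).
Qed.

Lemma qsign_non_injective m (f : 'I_m -> 'I_n) : ~~ injectiveb f -> qsign f = 0.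
Proof.
case/injectivePn => a [b neq_ab eq_f].
wlog lt_ab : a b neq_ab eq_f / (a < b)%N.
  move=> base; case: (ltngtP a b) => [|lt_ba|/val_inj eq_ab]; first exact: base.
    by apply: (base b a) => //; rewrite eq_sym.
  by rewrite eq_ab eqxx in neq_ab.
by rewrite qsign_pairs (bigD1 (a, b)) //= eq_f qweightxx mul0r.
Qed.

Lemma qsign_increasing m (f : 'I_m -> 'I_n) :
  (forall s t : 'I_m, (s < t)%N -> (f s < f t)%N) -> qsign f = 1.
Proof. by move=> f_incr; apply: big1 => s _; apply: big1 => t /f_incr/qweight_lt. Qed.

Lemma qsign_cat r k (f : 'I_(r + k) -> 'I_n) :
  qsign f = qsign (fun a => f (lshift k a)) * qsign (fun b => f (rshift r b)) *
            qcross (fun a => f (lshift k a)) (fun b => f (rshift r b)).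
Proof.
rewrite /qsign /qcross big_split_ord /= mulrAC -big_split /=; congr (_ * _).
  apply: eq_bigr => s _; rewrite big_split_ord /=; congr (_ * _).
  by apply: eq_bigl => t; rewrite /= ltn_addr.
apply: eq_bigr => s _; rewrite big_split_ord /= big_pred0 ?mul1r.
  by apply: eq_bigl => t; rewrite /= ltn_add2l.
by move=> t /=; rewrite ltnNge ltnW ?ltn_addr.
Qed.

Lemma qcross_image r k (J : r.-tuple 'I_n) (J' : k.-tuple 'I_n)
    (g : 'I_r -> 'I_n) (h : 'I_k -> 'I_n) :
  uniq J -> uniq J' -> injective g -> injective h ->
  (forall u, g u \in J) -> (forall u, h u \in J') ->
  qcross g h = qcross (tnth J) (tnth J').
Proof.
move=> J_uniq J'_uniq g_inj h_inj g_in h_in.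
rewrite /qcross (big_image_tuple J_uniq g_inj g_in _ (fun x => \prod_(t < k) qweight x (h t))).
by apply: eq_bigr => s _; apply: big_image_tuple.
Qed.

Lemma qcross_eq0 r k (g : 'I_r -> 'I_n) (h : 'I_k -> 'I_n) s u :
  h u = g s -> qcross g h = 0.
Proof.
by move=> eq_hg; rewrite /qcross (bigD1 s) //= (bigD1 u) //= eq_hg qweightxx !mul0r.
Qed.

Lemma eps_qsign k (I : k.-tuple 'I_n) : eps q I = qsign (tnth I).
Proof.
rewrite /eps; case: ifPn => [I_uniq | I_nuniq]; last first.
  by rewrite qsign_non_injective //; apply: contraNN I_nuniq => /injectiveP/tuple_uniqP.
apply: eq_bigr => s _; rewrite big_mkcondr; apply: eq_bigr => t lt_st /=.
case: (ltngtP (tnth I s) (tnth I t)) => [/qweight_lt -> //|/qweight_gt -> //|].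
move=> /val_inj /(tuple_uniqP _ I_uniq) eq_st.
by rewrite eq_st ltnn in lt_st.
Qed.

Lemma eps_perm_qsign r (J : r.-tuple 'I_n) (s : 'S_r) :
  increasing J -> eps_perm q J s = qsign (tnth J \o s).
Proof.
move=> J_incr; apply: eq_bigr => a _; rewrite big_mkcondr; apply: eq_bigr => b lt_ab /=.
rewrite -(increasing_tnth_ltn _ _ J_incr).
case: (ltngtP (tnth J (s a)) (tnth J (s b))) => [/qweight_lt -> //|/qweight_gt -> //|].
move=> /val_inj /(tuple_uniqP _ (increasing_uniq J_incr)) /perm_inj eq_ab.
by rewrite eq_ab ltnn in lt_ab.
Qed.

Lemma eps_cat_increasing r k (J : r.-tuple 'I_n) (J' : k.-tuple 'I_n) :
  increasing J -> increasing J' -> eps q (cat_tuple J J') = qcross (tnth J) (tnth J').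
Proof.
move=> J_incr J'_incr; rewrite eps_qsign qsign_cat.
rewrite !(eq_qsign (tnth_lshift J J')) !(eq_qsign (tnth_rshift J J')).
rewrite !qsign_increasing ?mul1r => [|a b|a b]; last 2 first.
- by rewrite increasing_tnth_ltn.
- by rewrite increasing_tnth_ltn.
rewrite /qcross; apply: eq_bigr => a _; apply: eq_bigr => b _.
by rewrite tnth_lshift tnth_rshift.
Qed.

End QSign.

Section ColumnDeterminant.
Variables (C : comNzRingType) (A : algType C) (n m : nat).
Variables (q : 'M[C]_n) (M : 'M[A]_(n, m)).

Definition cdet_monomial k (d : 'I_k -> 'I_m) (f : {ffun 'I_k -> 'I_n}) : A :=
  qsign q f *: \prod_(u < k) M (f u) (d u).

(* The sum runs over all row maps [f], the non-injective ones contributing 0;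
   for [k = n] this is cdet_q of the square matrix with columns [d]. *)
Definition cdet_cols k (d : 'I_k -> 'I_m) : A :=
  \sum_(f : {ffun 'I_k -> 'I_n}) cdet_monomial d f.

Lemma eq_cdet_cols k (d d' : 'I_k -> 'I_m) : d =1 d' -> cdet_cols d = cdet_cols d'.
Proof.
move=> eq_d; apply: eq_bigr => f _; congr (_ *: _).
by apply: eq_bigr => u _; rewrite eq_d.
Qed.

Section AdjacentColumns.
Variables (k : nat) (t0 t1 : 'I_k).
Hypothesis t1_succ : t1 = t0.+1 :> nat.

Lemma cdet_cols_pairs (d : 'I_k -> 'I_m) :
  cdet_cols d = \sum_(f : {ffun 'I_k -> 'I_n} | (f t0 < f t1)%N)
    (cdet_monomial d f + cdet_monomial d [ffun u => f (tperm t0 t1 u)]).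
Proof.
have neq_t01 : t0 != t1 by rewrite -(inj_eq (@ord_inj k)) t1_succ neq_ltn ltnSn.
rewrite /cdet_cols (bigID (fun f : {ffun 'I_k -> 'I_n} => (f t0 < f t1)%N)) /=.
rewrite [X in _ + X](bigID (fun f : {ffun 'I_k -> 'I_n} => (f t1 < f t0)%N)) /=.
rewrite [X in _ + (_ + X)]big1 ?addr0 => [|f /andP[/negbTE ge01 /negbTE ge10]]; last first.
  rewrite /cdet_monomial qsign_non_injective ?scale0r //; apply/injectivePn.
  by exists t0, t1; last by apply/val_inj/eqP; rewrite eqn_leq leqNgt ge10 leqNgt ge01.
rewrite big_split /=; congr (_ + _).
pose swap (f : {ffun 'I_k -> 'I_n}) := [ffun u => f (tperm t0 t1 u)].
have swapK : involutive swap by move=> f; apply/ffunP => u; rewrite !ffunE tpermK.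
rewrite (reindex_inj (can_inj swapK)); apply: eq_big => f; rewrite !ffunE tpermL tpermR //.
by case: ltngtP.
Qed.

Lemma cdet_monomial_tperm (f : {ffun 'I_k -> 'I_n}) (d : 'I_k -> 'I_m) :
  (f t0 < f t1)%N ->
  cdet_monomial d f + cdet_monomial d [ffun u => f (tperm t0 t1 u)] =
  (\prod_(x : 'I_k * 'I_k | (x.1 < x.2)%N && (x != (t0, t1))) qweight q (f x.1) (f x.2))
  *: (\prod_(u < k | (u < t0)%N) M (f u) (d u)
      * (M (f t0) (d t0) * M (f t1) (d t1)
         - q (f t1) (f t0) *: (M (f t1) (d t0) * M (f t0) (d t1)))
      * \prod_(u < k | (t1 < u)%N) M (f u) (d u)).
Proof.
move=> lt_f01; have [sign_f sign_swap] := qsign_tperm q f t1_succ.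
have sign_swap' : qsign q [ffun u => f (tperm t0 t1 u)] = qsign q (f \o tperm t0 t1).
  by apply: eq_qsign => u; rewrite ffunE.
rewrite /cdet_monomial sign_swap' sign_f sign_swap qweight_lt // qweight_gt // mul1r.
have -> : \prod_(u < k) M ([ffun u => f (tperm t0 t1 u)] u) (d u)
          = \prod_(u < k) M (f (tperm t0 t1 u)) (d u).
  by apply: eq_bigr => u _; rewrite ffunE.
rewrite !(prod_ord_adjacent t1_succ) tpermL tpermR.
rewrite !(prod_ord_tperm_outside t1_succ (fun u v => M (f v) (d u))).
rewrite [(- _) * _]mulrC -scalerA -scalerDr; congr (_ *: _).
by rewrite mulrBr mulrBl -scalerAr -scalerAl scaleNr.
Qed.

End AdjacentColumns.

Lemma cdet_sum_ffun r (J : r.-tuple 'I_n) (K : r.-tuple 'I_m) : increasing J ->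
  cdet q M J K
  = \sum_(g : {ffun 'I_r -> 'I_n} | [forall u, g u \in J]) cdet_monomial (tnth K) g.
Proof.
move=> J_incr; rewrite -sum_ffun_tuple ?increasing_uniq // -sum_perm_ffun => [|f f_ninj].
  apply: eq_bigr => s _; rewrite /cdet_monomial eps_perm_qsign //; congr (_ *: _).
    by apply: eq_qsign => u; rewrite ffunE pvalE.
  by apply: eq_bigr => u _; rewrite ffunE pvalE.
rewrite /cdet_monomial qsign_non_injective ?scale0r //.
apply: contraNN f_ninj => /injectiveP Jf_inj; apply/injectiveP => a b eq_f.
by apply: Jf_inj; rewrite !ffunE eq_f.
Qed.

Lemma cdet_ord_tuple (K : n.-tuple 'I_m) : cdet q M (ord_tuple n) K = cdet_cols (tnth K).
Proof.
rewrite cdet_sum_ffun ?increasing_ord_tuple //; apply: eq_bigl => g.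
by apply/forallP => u; have := mem_tnth (g u) (ord_tuple n); rewrite tnth_ord_tuple.
Qed.

Definition cdet_monomial_cat r k (I : r.-tuple 'I_m) (K : k.-tuple 'I_m)
    (g : {ffun 'I_r -> 'I_n}) (h : {ffun 'I_k -> 'I_n}) : A :=
  (qsign q g * qsign q h * qcross q g h) *:
    (\prod_(u < r) M (g u) (tnth I u) * \prod_(u < k) M (h u) (tnth K u)).

Lemma cdet_cols_cat r k (I : r.-tuple 'I_m) (K : k.-tuple 'I_m) :
  cdet_cols (tnth (cat_tuple I K))
  = \sum_(g : {ffun 'I_r -> 'I_n}) \sum_(h : {ffun 'I_k -> 'I_n}) cdet_monomial_cat I K g h.
Proof.
rewrite /cdet_cols sum_ffun_join; apply: eq_bigr => g _; apply: eq_bigr => h _.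
rewrite /cdet_monomial /cdet_monomial_cat qsign_cat big_split_ord /=.
congr (_ *: (_ * _)).
- congr (_ * _ * _).
  + by apply: eq_qsign => a; rewrite ffun_join_lshift.
  + by apply: eq_qsign => b; rewrite ffun_join_rshift.
  + rewrite /qcross; apply: eq_bigr => a _; apply: eq_bigr => b _.
    by rewrite ffun_join_lshift ffun_join_rshift.
- by apply: eq_bigr => a _; rewrite ffun_join_lshift tnth_lshift.
- by apply: eq_bigr => b _; rewrite ffun_join_rshift tnth_rshift.
Qed.

Lemma cdet_mul_cdet r k (J : r.-tuple 'I_n) (J' : k.-tuple 'I_n)
    (I : r.-tuple 'I_m) (K : k.-tuple 'I_m) :
  increasing J -> increasing J' ->
  eps q (cat_tuple J J') *: (cdet q M J I * cdet q M J' K)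
  = \sum_(g : {ffun 'I_r -> 'I_n} | [forall u, g u \in J])
      \sum_(h : {ffun 'I_k -> 'I_n} | [forall u, h u \in J']) cdet_monomial_cat I K g h.
Proof.
move=> J_incr J'_incr; rewrite (cdet_sum_ffun I J_incr) (cdet_sum_ffun K J'_incr).
rewrite mulr_suml scaler_sumr; apply: eq_bigr => g /forallP g_in.
rewrite mulr_sumr scaler_sumr; apply: eq_bigr => h /forallP h_in.
rewrite /cdet_monomial /cdet_monomial_cat -scalerAl -scalerAr !scalerA; congr (_ *: _).
have [/injectiveP g_inj | /qsign_non_injective ->] := boolP (injectiveb g); last first.
  by rewrite !(mul0r, mulr0).
have [/injectiveP h_inj | /qsign_non_injective ->] := boolP (injectiveb h); last first.
  by rewrite !(mul0r, mulr0).
rewrite eps_cat_increasing //.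
have J_uniq := increasing_uniq J_incr; have J'_uniq := increasing_uniq J'_incr.
by rewrite (qcross_image q J_uniq J'_uniq g_inj h_inj g_in h_in) -mulrA mulrC.
Qed.

Section Manin.
Variable p : 'M[C]_m.
Hypotheses (p_param : parametric p) (M_manin : manin q p M).

Lemma manin_minor_swap (i j : 'I_n) (k l : 'I_m) : (i < j)%N -> (k < l)%N ->
  M i l * M j k - q j i *: (M j l * M i k)
  = - p l k *: (M i k * M j l - q j i *: (M j k * M i l)).
Proof.
move=> lt_ij lt_kl; have [_ [p_inv _]] := p_param.
set U := M i k * M j l - _; set V := M i l * M j k - _.
have UV : U + p k l *: V = 0.
  rewrite -(M_manin.2 i j k l lt_ij lt_kl) /U /V scalerBr scalerA [p k l * _]mulrC.
  by rewrite addrAC addrA [M i k * M j l + _ - _]addrAC.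
have pV : p k l *: V = - U by rewrite -(addKr U (p k l *: V)) UV addr0.
by rewrite -[LHS]scale1r -(p_inv l k) -scalerA pV scalerN scaleNr.
Qed.

Lemma cdet_cols_adjacent_eq k (t0 t1 : 'I_k) (d : 'I_k -> 'I_m) :
  t1 = t0.+1 :> nat -> d t0 = d t1 -> cdet_cols d = 0.
Proof.
move=> t1_succ eq_d; rewrite (cdet_cols_pairs t1_succ); apply: big1 => f lt_f.
by rewrite (cdet_monomial_tperm t1_succ _ lt_f) eq_d M_manin.1 // subrr mulr0 mul0r scaler0.
Qed.

Lemma cdet_cols_adjacent_tperm k (t0 t1 : 'I_k) (d : 'I_k -> 'I_m) :
  t1 = t0.+1 :> nat -> (d t0 < d t1)%N ->
  cdet_cols (d \o tperm t0 t1) = qweight p (d t1) (d t0) *: cdet_cols d.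
Proof.
move=> t1_succ lt_d; rewrite !(cdet_cols_pairs t1_succ) scaler_sumr.
apply: eq_bigr => f lt_f; rewrite !(cdet_monomial_tperm t1_succ _ lt_f) /= tpermL tpermR.
rewrite !(prod_ord_tperm_outside t1_succ (fun u v => M (f u) (d v))).
by rewrite manin_minor_swap // qweight_gt // -scalerAr -scalerAl !scalerA mulrC.
Qed.

Lemma cdet_cols_ascending (c : 'I_m -> 'I_m) :
  (forall t0 t1 : 'I_m, t1 = t0.+1 :> nat -> (c t0 <= c t1)%N) ->
  cdet_cols c = qsign p c *: cdet_cols id.
Proof.
move=> c_asc.
have [[t0 t1] /= /andP[/eqP t1_succ /eqP eq_c] | no_eq] :=
  pickP (fun x : 'I_m * 'I_m => (x.2 == x.1.+1 :> nat) && (c x.1 == c x.2)).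
  rewrite (cdet_cols_adjacent_eq t1_succ eq_c) qsign_non_injective ?scale0r //.
  apply/injectivePn; exists t0, t1; last exact: eq_c.
  by rewrite -(inj_eq (@ord_inj m)) t1_succ neq_ltn ltnSn.
have c_incr (t0 t1 : 'I_m) : t1 = t0.+1 :> nat -> (c t0 < c t1)%N.
  move=> t1_succ; have := no_eq (t0, t1); rewrite /= t1_succ eqxx /= => /negbT neq_c.
  by rewrite ltn_neqAle (inj_eq (@ord_inj m)) neq_c c_asc.
rewrite qsign_increasing ?scale1r => [|s t]; last by rewrite !(adjacent_incr_id c_incr).
exact: eq_cdet_cols (adjacent_incr_id c_incr).
Qed.

Lemma cdet_cols_perm k (c : 'I_k -> 'I_m) : k = m -> cdet_cols c = qsign p c *: cdet_cols id.
Proof.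
move=> eq_km; subst k.
have [N] := ubnP (inversions c); elim: N c => // N IHN c lt_inv.
have [[t0 t1] /= /andP[/eqP t1_succ lt_c] | no_desc] :=
  pickP (fun x : 'I_m * 'I_m => (x.2 == x.1.+1 :> nat) && (c x.2 < c x.1)%N).
  have [sign_c sign_swap] := qsign_tperm p c t1_succ.
  have -> : cdet_cols c = cdet_cols ((c \o tperm t0 t1) \o tperm t0 t1).
    by apply: eq_cdet_cols => u /=; rewrite tpermK.
  rewrite cdet_cols_adjacent_tperm //= ?tpermL ?tpermR // IHN; last first.
    by move: lt_inv; rewrite (inversions_tperm t1_succ lt_c).
  by rewrite scalerA sign_c sign_swap (qweight_lt _ lt_c) mul1r.
apply: cdet_cols_ascending => t0 t1 t1_succ.
by have := no_desc (t0, t1); rewrite /= t1_succ eqxx /= => /negbT; rewrite -leqNgt.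
Qed.

End Manin.
End ColumnDeterminant.

Unset Implicit Arguments.

Theorem mainTheorem2 (R : realType) (A : algType R[i]) (n : nat)
    (q p : 'M[R[i]]_n) (M : 'M[A]_n)
    (Hq : parametric q) (Hp : parametric p) (HM : manin q p M)
    (r : nat) (Hr : (r <= n)%N)
    (I : r.-tuple 'I_n) (K : (n - r).-tuple 'I_n)
    (HI : uniq I) (HK : uniq K) :
  eps p (cat_tuple I K) *: cdet q M (ord_tuple n) (ord_tuple n)
  = \sum_(J : r.-tuple 'I_n | increasing J)
      eps q (cat_tuple J (compl_tuple J)) *:
        (cdet q M J I * cdet q M (compl_tuple J) K).
Proof.
have cdet_full : cdet q M (ord_tuple n) (ord_tuple n) = cdet_cols q M id.
  by rewrite cdet_ord_tuple; apply: eq_cdet_cols => u; rewrite tnth_ord_tuple.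
rewrite cdet_full eps_qsign -(cdet_cols_perm Hp HM _ (subnKC Hr)) cdet_cols_cat.
rewrite (sum_ffun_by_image (F := cdet_monomial_cat q M I K)) => [|g h|g h s u eq_hg].
- apply: eq_bigr => J J_incr.
  by rewrite cdet_mul_cdet ?increasing_compl_tuple ?increasing_uniq.
- by move=> /qsign_non_injective; rewrite /cdet_monomial_cat => ->; rewrite !mul0r scale0r.
- by rewrite /cdet_monomial_cat (qcross_eq0 _ eq_hg) mulr0 scale0r.
Qed.
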